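(* Let $q$ be a probability density on $\mathbb{R}^d$, let $\mathcal{K}:\mathbb{R}^d\times\mathbb{R}^d\to\mathbb{R}$ be a symmetric, positive semi-definite, twice continuously differentiable kernel, and let $\bm{x}^1,\dots,\bm{x}^K\in\mathbb{R}^d$ be samples from $q$. Define the kernel matrix $\mathbf{K}\in\mathbb{R}^{K\times K}$ by $\mathbf{K}_{ij}=\mathcal{K}(\bm{x}^i,\bm{x}^j)$ and the matrix $\langle \nabla,\mathbf{K}\rangle\in\mathbb{R}^{K\times d}$ by $\langle \nabla,\mathbf{K}\rangle_{ij}=\sum_{k=1}^K \frac{\partial}{\partial x^k_j}\mathcal{K}(\bm{x}^i,\bm{x}^k)$, where $x^k_j$ is the $j$-th coordinate of $\bm{x}^k$. Let $\eta\ge 0$ be such that $\mathbf{K}+\eta\mathbf{I}$ is invertible, and define the Stein gradient estimator $$\hat{\mathbf{G}}^{\mathrm{Stein}}_V := -(\mathbf{K}+\eta\mathbf{I})^{-1}\langle\nabla,\mathbf{K}\rangle\in\mathbb{R}^{K\times d}.$$ For a matrix $\hat{\mathbf{G}}\in\mathbb{R}^{K\times d}$, write $\hat{\bm{g}}(\bm{x}^k)\in\mathbb{R}^{d}$ for (the transpose of) its $k$-th row, and define the V-statistic of the kernelised Stein discrepancy $$\mathcal{S}_V^2(q,\hat q) := \frac{1}{K^2}\sum_{j=1}^K\sum_{l=1}^K\Big[\hat{\bm{g}}(\bm{x}^j)^{\mathrm T}\mathbf{K}_{jl}\hat{\bm{g}}(\bm{x}^l)+\hat{\bm{g}}(\bm{x}^j)^{\mathrm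 T}\nabla_{\bm{x}^l}\mathcal{K}(\bm{x}^j,\bm{x}^l)+\nabla_{\bm{x}^j}\mathcal{K}(\bm{x}^j,\bm{x}^l)^{\mathrm T}\hat{\bm{g}}(\bm{x}^l)+\mathrm{Tr}\big(\nabla_{\bm{x}^j,\bm{x}^l}\mathcal{K}(\bm{x}^j,\bm{x}^l)\big)\Big],$$ where $\nabla_{\bm{x}^j,\bm{x}^l}\mathcal{K}(\bm{x}^j,\bm{x}^l)$ is the $d\times d$ matrix of mixed second partial derivatives. Then $$\hat{\mathbf{G}}^{\mathrm{Stein}}_V=\operatorname*{argmin}_{\hat{\mathbf{G}}\in\mathbb{R}^{K\times d}}\ \mathcal{S}_V^2(q,\hat q)+\frac{\eta}{K^2}\|\hat{\mathbf{G}}\|_F^2,$$ where $\|\cdot\|_F$ is the Frobenius norm.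
   Context: Here $\hat{\mathbf{G}}$ is viewed as an approximation of the matrix whose $k$-th row is $\nabla_{\bm{x}}\log q(\bm{x}^k)^{\mathrm T}$, i.e. $\hat{\bm{g}}(\bm{x}^k)$ plays the role of $\nabla_{\bm{x}}\log\hat q(\bm{x}^k)$ for some approximating density $\hat q$; the objective depends on $\hat q$ only through the values $\hat{\bm{g}}(\bm{x}^k)$, $k=1,\dots,K$. *)

From HB Require Import structures.
From mathcomp Require Import all_boot all_order all_algebra.
From mathcomp Require Import all_classical all_reals.
From mathcomp Require Import topology normedtype derive.
Set Implicit Arguments. Unset Strict Implicit. Unset Printing Implicit Defensive.
Import Order.TTheory GRing.Theory Num.Theory.
Import numFieldNormedType.Exports.
Local Open Scope ring_scope.

Section SteinDefs.
Variables (R : realType) (d K : nat).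

Definition kernel := 'rV[R]_d -> 'rV[R]_d -> R.

Definition evec (a : 'I_d) : 'rV[R]_d := delta_mx 0 a.

Definition d2k (k : kernel) (a : 'I_d) (x y : 'rV[R]_d) : R :=
  'D_(evec a) (fun z => k x z) y.
Definition d1k (k : kernel) (a : 'I_d) (x y : 'rV[R]_d) : R :=
  'D_(evec a) (fun z => k z y) x.
Definition d12k (k : kernel) (a b : 'I_d) (x y : 'rV[R]_d) : R :=
  'D_(evec a) (fun z => d2k k b z y) x.

Definition kernel_symmetric (k : kernel) := forall x y, k x y = k y x.

Definition kernel_psd (k : kernel) :=
  forall (n : nat) (z : 'I_n -> 'rV[R]_d) (c : 'I_n -> R),
    0 <= \sum_(i < n) \sum_(j < n) c i * c j * k (z i) (z j).

Definition C2 (V : normedModType R) (F : V -> R) :=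
  [/\ (forall u p, derivable F p u),
      (forall u, continuous ('D_u F)),
      (forall u v p, derivable ('D_u F) p v) &
      (forall u v, continuous ('D_v ('D_u F)))].

Definition kernel_C2 (k : kernel) :=
  C2 (fun p : 'rV[R]_d * 'rV[R]_d => k p.1 p.2).

Definition kmat (k : kernel) (x : 'I_K -> 'rV[R]_d) : 'M[R]_K :=
  \matrix_(i, j) k (x i) (x j).

Definition gradK (k : kernel) (x : 'I_K -> 'rV[R]_d) : 'M[R]_(K, d) :=
  \matrix_(i, j) \sum_(l < K) d2k k j (x i) (x l).

Definition stein_est (k : kernel) (x : 'I_K -> 'rV[R]_d) (eta : R) : 'M[R]_(K, d) :=
  - (invmx (kmat k x + eta%:M) *m gradK k x).

Definition SV2 (k : kernel) (x : 'I_K -> 'rV[R]_d) (G : 'M[R]_(K, d)) : R :=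
  (K%:R ^+ 2)^-1 * \sum_(j < K) \sum_(l < K)
    ( (\sum_(a < d) G j a * kmat k x j l * G l a)
    + (\sum_(a < d) G j a * d2k k a (x j) (x l))
    + (\sum_(a < d) d1k k a (x j) (x l) * G l a)
    + (\sum_(a < d) d12k k a a (x j) (x l)) ).

Definition frob2 (G : 'M[R]_(K, d)) : R := \sum_(i < K) \sum_(a < d) G i a ^+ 2.

Definition stein_obj (k : kernel) (x : 'I_K -> 'rV[R]_d) (eta : R)
  (G : 'M[R]_(K, d)) : R :=
  SV2 k x G + eta / (K%:R ^+ 2) * frob2 G.

End SteinDefs.

(* The objective is quadratic in G.  Up to the factor K^-2 and an additive
   constant it equals tr(G^T M G) + 2 tr(B^T G), where M = K + eta I and
   B = <nabla, K>: the two cross terms of S_V^2 coincide because the kernel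
   is symmetric, and the Frobenius penalty turns K into K + eta I.  M is
   symmetric positive semi-definite, so completing the square around
   G0 = -M^-1 B gives obj(G) - obj(G0) = tr((G - G0)^T M (G - G0)) >= 0.
   Equality forces M (G - G0) = 0, hence G = G0 as M is invertible. *)

From HB Require Import structures.
From mathcomp Require Import all_boot all_order all_algebra.
From mathcomp Require Import all_classical all_reals.
From mathcomp Require Import topology normedtype derive.
From mathcomp Require Import ring lra.
Set Implicit Arguments. Unset Strict Implicit. Unset Printing Implicit Defensive.
Import Order.TTheory GRing.Theory Num.Theory.
Local Open Scope ring_scope.

Lemma mxtrace_trmx_mul (R : comPzSemiRingType) m n (A B : 'M[R]_(m, n)) :
  \tr (A^T *m B) = \sum_i \sum_j A i j * B i j.
Proof.
rewrite exchange_big; apply: eq_bigr => j _; rewrite !mxE.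
by apply: eq_bigr => i _; rewrite mxE.
Qed.

Lemma mxtrace_trmx_mulmx (R : comPzSemiRingType) m n (A B : 'M[R]_(m, n)) (M : 'M_m) :
  \tr (A^T *m M *m B) = \sum_i \sum_l \sum_j A i j * M i l * B l j.
Proof.
rewrite -mulmxA mxtrace_trmx_mul; apply: eq_bigr => i _.
rewrite exchange_big; apply: eq_bigr => j _; rewrite mxE mulr_sumr.
by apply: eq_bigr => l _; rewrite mulrA.
Qed.

Lemma mxtrace_trmx_mul_eq0 (R : realDomainType) m n (A : 'M[R]_(m, n)) :
  \tr (A^T *m A) = 0 -> A = 0.
Proof.
rewrite mxtrace_trmx_mul; under eq_bigr do under eq_bigr do rewrite -expr2.
move=> sum0; apply/matrixP => i j; rewrite mxE.
have row0 := psumr_eq0P (fun i _ => sumr_ge0 _ (fun j _ => sqr_ge0 (A i j))) sum0.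
have := psumr_eq0P (fun j _ => sqr_ge0 (A i j)) (row0 i isT) (i := j) isT.
by move=> /eqP; rewrite sqrf_eq0 => /eqP.
Qed.

Lemma quad_ge0_linear_coef_eq0 (R : realFieldType) (s a : R) :
  (forall t, 0 <= 2 * t * s + t ^+ 2 * a) -> s = 0.
Proof.
move=> ge0; have a_ge0 : 0 <= a by have := ge0 1; have := ge0 (-1); lra.
pose t := - s / (a + 1).
have ht : t * (a + 1) = - s by rewrite mulfVK //; lra.
by have := ge0 t; nra.
Qed.

Section PsdMatrix.
Variables (R : realFieldType) (n : nat).

Definition psdmx (M : 'M[R]_n) := forall c : 'I_n -> R,
  0 <= \sum_i \sum_j c i * c j * M i j.

Lemma psdmxD (M N : 'M[R]_n) : psdmx M -> psdmx N -> psdmx (M + N).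
Proof.
move=> Mpsd Npsd c.
have := addr_ge0 (Mpsd c) (Npsd c); rewrite -big_split; congr (0 <= _).
by apply: eq_bigr => i _; rewrite -big_split; apply: eq_bigr => j _ /=; rewrite mxE mulrDr.
Qed.

Lemma psdmx_scalar (a : R) : 0 <= a -> psdmx a%:M.
Proof.
move=> a_ge0 c; apply: sumr_ge0 => i _; rewrite (bigD1 i) //= big1 => [|j ji].
  by rewrite addr0 mxE eqxx mulr1n mulr_ge0 // -expr2 sqr_ge0.
by rewrite mxE eq_sym (negbTE ji) mulr0.
Qed.

Lemma psdmx_trace (M : 'M[R]_n) m (D : 'M[R]_(n, m)) :
  psdmx M -> 0 <= \tr (D^T *m M *m D).
Proof.
move=> Mpsd; rewrite mxtrace_trmx_mulmx.
under eq_bigr => i _ do rewrite exchange_big.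
rewrite exchange_big; apply: sumr_ge0 => j _.
have := Mpsd (fun i => D i j); congr (0 <= _).
by apply: eq_bigr => i _; apply: eq_bigr => l _; ring.
Qed.

Lemma psdmx_trace_eq0 (M : 'M[R]_n) m (D : 'M[R]_(n, m)) :
  M^T = M -> psdmx M -> \tr (D^T *m M *m D) = 0 -> M *m D = 0.
Proof.
(* The form at D + t W, with W := M D, is 2 t |W|^2 + t^2 W^T M W >= 0. *)
move=> Msym Mpsd D0; set W := M *m D.
have WMD : \tr (D^T *m M *m W) = \tr (W^T *m W).
  by rewrite -mxtrace_tr !trmx_mul trmxK Msym mulmxA.
have expand t : \tr ((D + t *: W)^T *m M *m (D + t *: W))
    = 2 * t * \tr (W^T *m W) + t ^+ 2 * \tr (W^T *m M *m W).
  rewrite [(D + _)^T]raddfD /= linearZ /= !mulmxDl !mulmxDr.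
  rewrite -!scalemxAl -!scalemxAr !mxtraceD !mxtraceZ D0 WMD -mulmxA -/W.
  ring.
apply: mxtrace_trmx_mul_eq0; apply: (@quad_ge0_linear_coef_eq0 _ _ (\tr (W^T *m M *m W))).
by move=> t; rewrite -expand; apply: psdmx_trace.
Qed.

End PsdMatrix.

Section QuadraticMinimisation.
Variables (R : realFieldType) (n m : nat) (M : 'M[R]_n) (B : 'M[R]_(n, m)).
Hypothesis Msym : M^T = M.

Definition quadmx (G : 'M[R]_(n, m)) := \tr (G^T *m M *m G) + 2 * \tr (B^T *m G).

Lemma quadmx_sub G G0 : M *m G0 = - B ->
  quadmx G - quadmx G0 = \tr ((G - G0)^T *m M *m (G - G0)).
Proof.
move=> MG0; set D := G - G0; have -> : G = G0 + D by rewrite addrC subrK.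
clearbody D.
have cross : \tr (G0^T *m M *m D) = \tr (D^T *m M *m G0).
  by rewrite -mxtrace_tr !trmx_mul trmxK Msym mulmxA.
have BD : \tr (D^T *m M *m G0) = - \tr (B^T *m D).
  by rewrite -mulmxA MG0 mulmxN linearN /= -mxtrace_tr trmx_mul trmxK.
rewrite /quadmx [(G0 + D)^T]raddfD /= !mulmxDl !mulmxDr !mxtraceD cross BD.
ring.
Qed.

Hypotheses (Mpsd : psdmx M) (Munit : M \in unitmx).

Lemma mulmx_invmx_opp : M *m - (invmx M *m B) = - B.
Proof. by rewrite mulmxN mulKVmx. Qed.

Lemma quadmx_min G : quadmx (- (invmx M *m B)) <= quadmx G.
Proof.
by rewrite -subr_ge0 quadmx_sub ?mulmx_invmx_opp //; apply: psdmx_trace.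
Qed.

Lemma quadmx_argmin_unique G :
  quadmx G <= quadmx (- (invmx M *m B)) -> G = - (invmx M *m B).
Proof.
set G0 := - (invmx M *m B) => le_G_G0.
have D0 : \tr ((G - G0)^T *m M *m (G - G0)) = 0.
  apply/eqP; rewrite eq_le psdmx_trace // andbT.
  by rewrite -quadmx_sub ?mulmx_invmx_opp // subr_le0.
apply/eqP; rewrite -subr_eq0; apply/eqP.
by rewrite -(mulKmx Munit (G - G0)) [M *m _]psdmx_trace_eq0 // mulmx0.
Qed.

End QuadraticMinimisation.

Section SteinObjective.
Variables (R : realType) (d K : nat) (k : kernel R d) (x : 'I_K -> 'rV[R]_d).

Lemma psdmx_kmat : kernel_psd k -> psdmx (kmat k x).
Proof.
move=> kpsd c; have := kpsd K x c; congr (0 <= _).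
by apply: eq_bigr => i _; apply: eq_bigr => j _; rewrite mxE.
Qed.

Lemma frob2E (G : 'M[R]_(K, d)) : frob2 G = \tr (G^T *m G).
Proof.
by rewrite mxtrace_trmx_mul; apply: eq_bigr => i _; apply: eq_bigr => a _; rewrite expr2.
Qed.

Lemma sum_d2k_gradK (G : 'M[R]_(K, d)) :
  \sum_j \sum_l \sum_a G j a * d2k k a (x j) (x l) = \tr ((gradK k x)^T *m G).
Proof.
rewrite mxtrace_trmx_mul; apply: eq_bigr => j _; rewrite exchange_big.
apply: eq_bigr => a _; rewrite mxE mulr_suml.
by apply: eq_bigr => l _; rewrite mulrC.
Qed.

Hypothesis ksym : kernel_symmetric k.

Lemma kmat_tr : (kmat k x)^T = kmat k x.
Proof. by apply/matrixP => i j; rewrite !mxE ksym. Qed.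

Lemma d1k_sym a (y z : 'rV[R]_d) : d1k k a y z = d2k k a z y.
Proof.
rewrite /d1k /d2k (_ : (fun w => k w z) = k z) //.
by apply: funext => w; rewrite ksym.
Qed.

Lemma sum_d1k_gradK (G : 'M[R]_(K, d)) :
  \sum_j \sum_l \sum_a d1k k a (x j) (x l) * G l a = \tr ((gradK k x)^T *m G).
Proof.
rewrite -sum_d2k_gradK exchange_big; apply: eq_bigr => l _; apply: eq_bigr => j _.
by apply: eq_bigr => a _; rewrite d1k_sym mulrC.
Qed.

Lemma stein_objE eta (G : 'M[R]_(K, d)) :
  stein_obj k x eta G = (K%:R ^+ 2)^-1 *
    (quadmx (kmat k x + eta%:M) (gradK k x) G
     + \sum_j \sum_l \sum_a d12k k a a (x j) (x l)).
Proof.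
have kquad : \sum_j \sum_l \sum_a G j a * kmat k x j l * G l a
    = \tr (G^T *m kmat k x *m G).
  by rewrite mxtrace_trmx_mulmx.
rewrite /stein_obj /SV2; under eq_bigr do rewrite !big_split /=.
rewrite !big_split /= kquad sum_d2k_gradK sum_d1k_gradK frob2E.
rewrite /quadmx mulmxDr mul_mx_scalar mulmxDl -scalemxAl mxtraceD mxtraceZ.
ring.
Qed.

End SteinObjective.

Theorem theorem1 (R : realType) (d K : nat) (k : kernel R d)
  (x : 'I_K -> 'rV[R]_d) (eta : R) :
  kernel_symmetric k -> kernel_psd k -> kernel_C2 k ->
  0 <= eta -> kmat k x + eta%:M \in unitmx ->
  (forall G : 'M[R]_(K, d), stein_obj k x eta (stein_est k x eta) <= stein_obj k x eta G) /\
  (forall G : 'M[R]_(K, d), stein_obj k x eta G <= stein_obj k x eta (stein_est k x eta) ->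
     G = stein_est k x eta).
Proof.
move=> ksym kpsd _ eta_ge0 Munit.
have Msym : (kmat k x + eta%:M)^T = kmat k x + eta%:M.
  by rewrite [(_ + _)^T]raddfD /= kmat_tr // tr_scalar_mx.
have Mpsd : psdmx (kmat k x + eta%:M).
  by apply: psdmxD; [exact: psdmx_kmat | exact: psdmx_scalar].
have c_ge0 : 0 <= (K%:R ^+ 2 : R)^-1 by rewrite invr_ge0 exprn_ge0.
split=> G; rewrite !stein_objE //.
  by rewrite ler_wpM2l // lerD2r quadmx_min.
(* For K = 0 the factor (K^2)^-1 is 0^-1 = 0, but then 'M_(0, d) is trivial. *)
case: (posnP K) => [K0 | K_gt0].
  by move=> _; apply/matrixP => i; have := ltn_ord i; rewrite [X in (_ < X)%N]K0.
have c_gt0 : 0 < (K%:R ^+ 2 : R)^-1 by rewrite invr_gt0 exprn_gt0 // ltr0n.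
by rewrite ler_pM2l // lerD2r; apply: quadmx_argmin_unique.
Qed.
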